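(* Let $\mathscr{V}\subseteq\mathfrak{B}(\mathcal{H})$ be a linear subspace with ${\rm supp}(\mathscr{V})=\mathcal{H}$, let $\rho$ be a positive definite operator with $\rho\sim{\rm alg}(\mathcal{D}_\rho^{-1}(\mathscr{V}))$, and let $\sigma$ be another positive definite operator. If $\mathcal{D}_\rho^{-1}(\sigma)\in{\rm alg}(\mathcal{D}_\rho^{-1}(\mathscr{V}))$, then $${\rm alg}\big(\mathcal{D}_\sigma^{-1}(\mathscr{V})\big)\subseteq\mathcal{D}_\sigma^{-1}\big({\rm alg}_\rho(\mathscr{V})\big).$$
   Context: $\mathcal{H}$ finite-dimensional complex Hilbert space, $\mathfrak{B}(\mathcal{H})$ its linear operators. A $*$-algebra is a linear subspace of $\mathfrak{B}(\mathcal{H})$ closed under products and adjoints; ${\rm alg}(\mathcal{S})$ is the smallest $*$-algebra containing $\mathcal{S}$. ${\rm supp}(X)=(\ker X)^\perp$, ${\rm supp}(\mathcal{S})=\sum_{X\in\mathcal{S}}{\rm supp}(X)$. For positive definite $\rho$, $\mathcal{D}_\rho(X)=\rho^{1/2}X\rho^{1/2}$, $\mathcal{D}_\rho^{-1}(X)=\rho^{-1/2}X\rho^{-1/2}$. A $\rho$-distorted algebra is a linear subspace closed under adjoints and the product $X\cdot_\rho Y=X\rho^{-1}Y$; ${\rm alg}_\rho(\mathcal{S})$ is the smallest one containing $\mathcal{S}$. Wedderburn decomposition of a unital $*$-algebra $\mathscr{A}$: unitary $U$, $\mathcal{H}\cong\bigoplus_l\mathcal{H}_{S,l}\otimes\mathcal{H}_{F,l}$,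 $\mathscr{A}=U(\bigoplus_l\mathfrak{B}(\mathcal{H}_{S,l})\otimes I_{F,l})U^\dagger$. Compatibility: $\rho\sim\mathscr{A}$ if for some Wedderburn decomposition of $\mathscr{A}$, $\rho=U(\bigoplus_l\rho_{S,l}\otimes\tau_{F,l})U^\dagger$ with $\rho_{S,l}\in\mathfrak{B}(\mathcal{H}_{S,l})$, $\tau_{F,l}\in\mathfrak{B}(\mathcal{H}_{F,l})$. *)

(* The Hilbert space H is C^n with C = R[i], R a realType
   (so C is the field of complex numbers); operators are n x n matrices. *)
From HB Require Import structures.
From mathcomp Require Import all_boot all_order all_algebra.
From mathcomp Require Import reals.
From mathcomp.real_closed Require Import complex mxtens.

Set Implicit Arguments.
Unset Strict Implicit.
Unset Printing Implicit Defensive.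

Import Order.TTheory GRing.Theory Num.Theory.
Local Open Scope ring_scope.

Section Defs.
Variables (C : numClosedFieldType) (n : nat).
Local Notation M := 'M[C]_n.

Definition adj (p q : nat) (A : 'M[C]_(p, q)) : 'M[C]_(q, p) :=
  map_mx Num.conj A^T.

Definition opset := M -> Prop.

Definition subset_op (S T : opset) : Prop := forall X, S X -> T X.

Definition linear_subspace (V : opset) : Prop :=
  [/\ V 0, (forall X Y, V X -> V Y -> V (X + Y)) &
      (forall (a : C) X, V X -> V (a *: X))].

Definition star_algebra (A : opset) : Prop :=
  [/\ linear_subspace A, (forall X Y, A X -> A Y -> A (X *m Y)) &
      (forall X, A X -> A (adj X))].

Definition alg (S : opset) : opset :=
  fun X => forall A, star_algebra A -> subset_op S A -> A X.

Definition distorted_algebra (rho : M) (A : opset) : Prop :=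
  [/\ linear_subspace A, (forall X Y, A X -> A Y -> A (X *m invmx rho *m Y)) &
      (forall X, A X -> A (adj X))].

Definition alg_rho (rho : M) (S : opset) : opset :=
  fun X => forall A, distorted_algebra rho A -> subset_op S A -> A X.

Definition posdef (A : M) : Prop :=
  adj A = A /\ forall v : 'cV[C]_n, v != 0 -> 0 < (adj v *m A *m v) 0 0.

(* supp(X) = (ker X)^perp, as a predicate on vectors *)
Definition supp (X : M) : 'cV[C]_n -> Prop :=
  fun w => forall v : 'cV[C]_n, X *m v = 0 -> adj v *m w = 0.

(* supp(S) = H : every vector is a finite sum of vectors in supports of
   elements of S *)
Definition full_support (S : opset) : Prop :=
  forall w : 'cV[C]_n, exists s : seq (M * 'cV[C]_n),
    (forall p, p \in s -> S p.1 /\ supp p.1 p.2) /\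
    w = \sum_(p <- s) p.2.

(* D_r^{-1}(X) = r^{-1} X r^{-1}, where r = rho^{1/2} *)
Definition Dinv (r : M) (X : M) : M := invmx r *m X *m invmx r.

Definition Dinv_set (r : M) (S : opset) : opset :=
  fun Y => exists2 X, S X & Y = Dinv r X.

Definition unitary (U : M) : Prop := U *m adj U = 1%:M /\ adj U *m U = 1%:M.

(* rho ~ A : there is a Wedderburn decomposition of A,
     H = U ( (+)_l H_{S,l} (x) H_{F,l} ),  A = U ( (+)_l B(H_{S,l}) (x) I_{F,l} ) U^dag,
   in which rho = U ( (+)_l rho_{S,l} (x) tau_{F,l} ) U^dag. *)
Definition compatible (rho : M) (A : opset) : Prop :=
  exists (k : nat) (dS dF : 'I_k -> nat)
         (E : (\sum_(l < k) dS l * dF l)%N = n) (U : M),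
    [/\ unitary U,
        (forall X, A X <->
           exists B : forall l, 'M[C]_(dS l),
             X = U *m castmx (E, E)
                   (mxdiag (fun l => B l *t (1%:M : 'M[C]_(dF l)))) *m adj U) &
        exists (rS : forall l, 'M[C]_(dS l)) (tF : forall l, 'M[C]_(dF l)),
          rho = U *m castmx (E, E) (mxdiag (fun l => rS l *t tF l)) *m adj U].

End Defs.

From HB Require Import structures.
From mathcomp Require Import all_boot all_order all_algebra.
From mathcomp Require Import reals.
From mathcomp.real_closed Require Import complex mxtens.
From mathcomp Require Import ring.
Set Implicit Arguments.
Unset Strict Implicit.
Unset Printing Implicit Defensive.

Import Order.TTheory GRing.Theory Num.Theory.
Local Open Scope ring_scope.

(* A *-algebra and a rho-distorted algebra are both instances of
   a "W-weighted algebra": a linear subspace closed under adjoints and under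
   the product X W Y (W = 1, resp. W = rho^{-1}).  For a self-adjoint t the
   congruence Z |-> t Z t pulls a W-weighted algebra back to a (t W t)-weighted
   one.  With t = r = rho^{1/2} (t W t = 1 for W = rho^{-1}) this identifies
   alg_rho(V) with r alg(D_rho^{-1}(V)) r.  Since a subspace of matrices closed
   under products contains the inverse of each of its invertible elements
   (Cayley-Hamilton), the hypothesis D_rho^{-1}(sigma) in alg(D_rho^{-1}(V))
   makes alg_rho(V) closed under X sigma^{-1} Y as well.  Pulling this
   sigma^{-1}-weighted algebra back along s = sigma^{1/2} gives a *-algebra
   containing D_sigma^{-1}(V), hence containing alg(D_sigma^{-1}(V)); this is
   the claimed inclusion. *)

Section WeightedAlgebras.
Variables (C : numClosedFieldType) (n : nat).
Local Notation M := 'M[C]_n.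
Local Notation opset := (opset C n).

Definition weighted_algebra (W : M) (A : opset) : Prop :=
  [/\ linear_subspace A, (forall X Y, A X -> A Y -> A (X *m W *m Y)) &
      (forall X, A X -> A (adj X))].

Lemma star_algebraE (A : opset) : star_algebra A <-> weighted_algebra 1%:M A.
Proof.
by split=> [] [AL AM AJ]; split=> // X Y AX AY;
  [rewrite mulmx1 | rewrite -[X]mulmx1]; apply: AM.
Qed.

Lemma weighted_algebra_meet (W : M) (P Q : opset -> Prop) :
  (forall A, P A -> weighted_algebra W A) ->
  weighted_algebra W (fun X => forall A, P A -> Q A -> A X).
Proof.
move=> PW; split; [split|..].
- by move=> A /PW [[A0 _ _] _ _].
- move=> X Y HX HY A PA QA; have [[_ AD _] _ _] := PW A PA.
  by apply: AD; [exact: HX | exact: HY].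
- by move=> a X HX A PA QA; have [[_ _ AZ] _ _] := PW A PA; apply: AZ; exact: HX.
- move=> X Y HX HY A PA QA; have [_ AM _] := PW A PA.
  by apply: AM; [exact: HX | exact: HY].
- by move=> X HX A PA QA; have [_ _ AJ] := PW A PA; apply: AJ; exact: HX.
Qed.

Lemma alg_star (S : opset) : star_algebra (alg S).
Proof. by apply/star_algebraE/weighted_algebra_meet => A /star_algebraE. Qed.

Lemma alg_sub (S : opset) : subset_op S (alg S).
Proof. by move=> X HX A _; apply. Qed.

Lemma alg_rho_distorted (rho : M) (S : opset) :
  distorted_algebra rho (alg_rho rho S).
Proof. exact: weighted_algebra_meet. Qed.

Lemma alg_rho_sub (rho : M) (S : opset) : subset_op S (alg_rho rho S).
Proof. by move=> X HX A _; apply. Qed.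

Lemma adjM (A B : M) : adj (A *m B) = adj B *m adj A.
Proof. by rewrite /adj trmx_mul map_mxM. Qed.

Lemma adjV (A : M) : adj (invmx A) = invmx (adj A).
Proof. by rewrite /adj trmx_inv map_invmx. Qed.

Lemma weighted_congruence (W t : M) (A : opset) : adj t = t ->
  weighted_algebra W A ->
  weighted_algebra (t *m W *m t) (fun Z => A (t *m Z *m t)).
Proof.
move=> tsa [[A0 AD AZ] AM AJ]; split; [split|..].
- by rewrite mulmx0 mul0mx.
- by move=> X Y HX HY; rewrite mulmxDr mulmxDl; apply: AD.
- by move=> a X HX; rewrite -scalemxAr -scalemxAl; apply: AZ.
- by move=> X Y HX HY; have := AM _ _ HX HY; rewrite !mulmxA.
- by move=> X HX; have := AJ _ HX; rewrite !adjM tsa mulmxA.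
Qed.

Lemma invmx_right (m : nat) (A B : 'M[C]_m) :
  A \in unitmx -> A *m B = 1%:M -> invmx A = B.
Proof. by move=> Au AB; rewrite -[invmx A]mulmx1 -AB mulKmx. Qed.

Lemma horner_mulX_mem (m : nat) (A : 'M[C]_m.+1 -> Prop) (c : 'M[C]_m.+1) :
  linear_subspace A -> (forall X Y, A X -> A Y -> A (X *m Y)) -> A c ->
  forall q : {poly C}, A (horner_mx c ('X * q)).
Proof.
move=> [A0 AD AZ] AM Ac; elim/poly_ind => [|q a IH]; first by rewrite mulr0 rmorph0.
rewrite mulrDr mulrA rmorphD rmorphM /= horner_mx_X -mulmxE.
have -> : 'X * a%:P = a *: 'X :> {poly C} by rewrite mulrC mul_polyC.
by rewrite linearZ /= horner_mx_X; apply: AD; [apply: AM | apply: AZ].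
Qed.

(* Cayley-Hamilton: the inverse of an invertible matrix c is a polynomial in c
   without constant term. *)
Lemma invmx_horner (m : nat) (c : 'M[C]_m.+1) : c \in unitmx ->
  exists q : {poly C}, invmx c = horner_mx c ('X * q).
Proof.
move=> cu; set p := char_poly c; set q := drop_poly 1 p.
have p0 : p`_0 != 0.
  by rewrite /p char_poly_det mulf_eq0 negb_or signr_eq0 -unitfE -unitmxE.
have p_split : p = (p`_0)%:P + q * 'X.
  rewrite -[LHS](poly_take_drop 1) expr1; congr (_ + _).
  by apply/polyP => i; rewrite !coefE; case: i.
set a := - (p`_0)^-1; set k := horner_mx c (a *: q).
have CH : horner_mx c ('X * q) = - (p`_0)%:M.
  have := Cayley_Hamilton c; rewrite -/p [in X in horner_mx _ X]p_split.
  rewrite rmorphD /= horner_mx_C mulrC => /eqP.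
  by rewrite addr_eq0 => /eqP ->; rewrite opprK.
have ck : c *m k = 1%:M.
  rewrite /k linearZ /= -scalemxAr.
  have -> : c *m horner_mx c q = horner_mx c ('X * q).
    by rewrite rmorphM /= horner_mx_X mulmxE.
  by rewrite CH /a scaleNr scalerN opprK -[(p`_0)%:M]scalemx1 scalerA mulVf // scale1r.
rewrite (invmx_right cu ck).
exists (a ^+ 2 *: q ^+ 2).
have -> : 'X * (a ^+ 2 *: q ^+ 2) = (a *: q) * 'X * (a *: q) :> {poly C}.
  by rewrite -!mul_polyC rmorphXn; ring.
by rewrite !rmorphM /= horner_mx_X -!mulmxE -/k -mulmxA ck mulmx1.
Qed.

Lemma mult_algebra_invmx (A : opset) (c : M) :
  linear_subspace A -> (forall X Y, A X -> A Y -> A (X *m Y)) ->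
  A c -> c \in unitmx -> A (invmx c).
Proof.
case: n => [|m] in A c * => AL AM Ac cu.
  by rewrite [invmx c]flatmx0; case: AL.
have [q ->] := invmx_horner cu.
exact: horner_mulX_mem.
Qed.

(* A positive definite matrix is invertible: a kernel vector would give a
   vanishing quadratic form. *)
Lemma posdef_unit (r : M) : posdef r -> r \in unitmx.
Proof.
case=> _ Hr; rewrite unitmxE unitfE -det_tr; apply/negP => /det0P [u u0 ur].
have : 0 < (adj u^T *m r *m u^T) 0 0.
  by apply: Hr; rewrite -(inj_eq (@trmx_inj _ _ _)) trmxK trmx0.
rewrite -mulmxA.
have -> : r *m u^T = 0 by rewrite -[r]trmxK -trmx_mul ur trmx0.
by rewrite mulmx0 mxE ltxx.
Qed.

Section Congruence.
Variable t : M.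
Hypotheses (tu : t \in unitmx) (tsa : adj t = t).

Lemma Dinv_congrK (X : M) : t *m Dinv t X *m t = X.
Proof. by rewrite /Dinv !mulmxA mulmxV // mul1mx -mulmxA mulVmx // mulmx1. Qed.

Lemma congr_DinvK (X : M) : Dinv t (t *m X *m t) = X.
Proof. by rewrite /Dinv !mulmxA mulVmx // mul1mx -mulmxA mulmxV // mulmx1. Qed.

Lemma invmx_sqr : invmx (t *m t) = invmx t *m invmx t.
Proof.
apply: invmx_right; first by rewrite unitmx_mul tu.
by rewrite mulmxA mulmxK // mulmxV.
Qed.

Lemma invmx_Dinv (sigma : M) : sigma \in unitmx ->
  invmx (Dinv t sigma) = t *m invmx sigma *m t.
Proof.
move=> su; apply: invmx_right; first by rewrite !unitmx_mul !unitmx_inv tu su.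
by rewrite /Dinv !mulmxA mulmxKV // mulmxK // mulVmx.
Qed.

Lemma Dinv_weighted (W X Y : M) :
  Dinv t X *m (t *m W *m t) *m Dinv t Y = Dinv t (X *m W *m Y).
Proof. by rewrite /Dinv !mulmxA mulmxKV // mulmxK. Qed.

Variable V : opset.

Lemma alg_Dinv_congr (A : opset) :
  weighted_algebra (invmx (t *m t)) A -> subset_op V A ->
  forall Y, alg (Dinv_set t V) Y -> A (t *m Y *m t).
Proof.
move=> AW VA Y HY; apply: (HY (fun Z => A (t *m Z *m t))); last first.
  by move=> _ [X VX ->] /=; rewrite Dinv_congrK; apply: VA.
apply/star_algebraE; have := weighted_congruence tsa AW.
by rewrite invmx_sqr mulmxA mulmxKV // mulmxV.
Qed.

Lemma alg_rho_Dinv (X : M) :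
  alg_rho (t *m t) V X -> alg (Dinv_set t V) (Dinv t X).
Proof.
move=> HX; apply: (HX (fun Z => alg (Dinv_set t V) (Dinv t Z))); last first.
  by move=> Y VY; apply: alg_sub; exists Y.
have tVsa : adj (invmx t) = invmx t by rewrite adjV tsa.
have [algW _] := star_algebraE (alg (Dinv_set t V)).
have := weighted_congruence tVsa (algW (alg_star _)).
by rewrite mulmx1 -invmx_sqr.
Qed.

Lemma alg_rho_reweight (sigma : M) : sigma \in unitmx ->
  alg (Dinv_set t V) (Dinv t sigma) ->
  weighted_algebra (invmx sigma) (alg_rho (t *m t) V).
Proof.
move=> su Hsigma; have [rhoL _ rhoJ] := alg_rho_distorted (t *m t) V.
split=> // X Y HX HY; rewrite -[_ *m Y]Dinv_congrK.
apply: alg_Dinv_congr; [exact: alg_rho_distorted | exact: alg_rho_sub |].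
(* In D_t^{-1} coordinates the product is D X . D(sigma)^{-1} . D Y. *)
rewrite -Dinv_weighted -invmx_Dinv //.
have [algL algM _] := alg_star (Dinv_set t V).
have sDu : Dinv t sigma \in unitmx by rewrite !unitmx_mul !unitmx_inv tu su.
have Hinv := mult_algebra_invmx algL algM Hsigma sDu.
apply: (algM); last exact: alg_rho_Dinv.
by apply: (algM); [exact: alg_rho_Dinv | exact: Hinv].
Qed.
End Congruence.
End WeightedAlgebras.

Theorem mainTheorem7 (R : realType) (n : nat) (V : opset R[i] n)
    (rho sigma r s : 'M[R[i]]_n) :
  linear_subspace V ->
  full_support V ->
  posdef rho -> posdef r -> r *m r = rho ->
  posdef sigma -> posdef s -> s *m s = sigma ->
  compatible rho (alg (Dinv_set r V)) ->
  alg (Dinv_set r V) (Dinv r sigma) ->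
  subset_op (alg (Dinv_set s V)) (Dinv_set s (alg_rho rho V)).
Proof.
move=> _ _ _ r_pd <- _ s_pd <- _ Hsigma Y HY.
have [ru su] := (posdef_unit r_pd, posdef_unit s_pd).
have sigmaW : weighted_algebra (invmx (s *m s)) (alg_rho (r *m r) V).
  by apply: (alg_rho_reweight ru r_pd.1); rewrite ?unitmx_mul ?su.
exists (s *m Y *m s); last by rewrite congr_DinvK.
apply: (alg_Dinv_congr su s_pd.1 sigmaW) HY; exact: alg_rho_sub.
Qed.
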